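(* Assume the growth hypotheses described in the context, and let $C,C_0>0$ be constants such that $\int e^{t|y|^{\beta_i}}\nu(dy)\le C_0e^{Ct^{p/\tilde\alpha_i}}$ for all $t\ge0$ and all $1\le i\le N$ (such constants exist by the exponential moment assumption). Let $f\in L^1(\mu)$ be such that $f^c$ and $f^{cc}$ are well defined. Then for all $x\in\mathsf{X}$, $y\in\mathsf{Y}$, $$f^c(y)-c_2(y)\le A_+-\mu(f-c_1)+\sum_{i=1}^NK_+^iA_{\alpha_i}|y|^{\beta_i},$$ $$f^{cc}(x)-c_1(x)\ge\mu(f-c_1)-A_+-\log C_0-a_-(x)-C\sum_{i=1}^NN^{\frac{p}{\tilde\alpha_i}-1}\big(K_+^iA_{\alpha_i}+K_-^i|x|^{\alpha_i}\big)^{p/\tilde\alpha_i}.$$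
   Context: $(\mathsf{X},d_{\mathsf{X}})$, $(\mathsf{Y},d_{\mathsf{Y}})$ are Polish metric spaces with reference points $x_0,y_0$; $|x|:=d_{\mathsf{X}}(x,x_0)$, $|y|:=d_{\mathsf{Y}}(y,y_0)$. $\mu\in\mathcal{P}(\mathsf{X})$, $\nu\in\mathcal{P}(\mathsf{Y})$, $c:\mathsf{X}\times\mathsf{Y}\to\mathbb{R}$ measurable; $\mu(h):=\int h\,d\mu$. Conjugates: for measurable $f:\mathsf{X}\to[-\infty,\infty]$, $f^c(y):=-\log\int e^{f(x)-c(x,y)}\mu(dx)$ and $f^{cc}(x):=-\log\int e^{f^c(y)-c(x,y)}\nu(dy)$ (when the integrals are well defined). Growth hypotheses: fix $p>0$ with $\int e^{\lambda|y|^p}\nu(dy)<\infty$ for some $\lambda>0$; fix $N\ge0$ and $\alpha_i\in[0,p]$, $\beta_i\in[0,p)$ with $\alpha_i+\beta_i\le p$ ($1\le i\le N$), and set $\tilde\alpha_i:=p-\beta_i$. The cost has the form $c(x,y)=c_1(x)+c_2(y)+\hat c(x,y)$ with $c_1\in L^1(\mu)$, $c_2\in L^1(\nu)$ and $-a_-(x)-\sum_{i=1}^NK_-^i|x|^{\alpha_i}|y|^{\beta_i}\le\hat c(x,y)\le a_+(x)+\sum_{i=1}^NK_+^i|x|^{\alpha_i}|y|^{\beta_i}$, where $K_\pm^i\ge0$ and $a_\pm\ge0$ are measurable with $A_+:=\int a_+d\mu<\infty$. Set $A_{\alpha_i}:=\int|x|^{\alpha_i}\mu(dx)$, assumed finite.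 *)

From HB Require Import structures.
From mathcomp Require Import all_boot all_order all_algebra.
From mathcomp Require Import all_classical all_reals all_analysis measurable_realfun.
Set Implicit Arguments. Unset Strict Implicit. Unset Printing Implicit Defensive.
Import Order.TTheory GRing.Theory Num.Theory.
Local Open Scope classical_set_scope.
Local Open Scope ring_scope.

Definition is_metric {R : realType} {T : Type} (d : T -> T -> R) : Prop :=
  (forall x y, 0 <= d x y) /\ (forall x y, d x y = 0 <-> x = y) /\
  (forall x y, d x y = d y x) /\ (forall x y z, d x z <= d x y + d y z).

Definition polish_borel {R : realType} {disp : measure_display}
  (T : measurableType disp) (d : T -> T -> R) : Prop :=
  is_metric d /\
  (forall u : nat -> T,
     (forall e : R, 0 < e -> exists M : nat, forall m n, (M <= m)%N -> (M <= n)%N -> d (u m) (u n) < e) ->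
     exists l : T, forall e : R, 0 < e -> exists M : nat, forall n, (M <= n)%N -> d (u n) l < e) /\
  (exists s : nat -> T, forall x (e : R), 0 < e -> exists n, d x (s n) < e) /\
  (@measurable disp T =
     <<s [set B : set T | forall x, B x -> exists2 r : R, 0 < r & [set y | d x y < r] `<=` B] >>).

Local Open Scope ereal_scope.

Definition cconj {R : realType} {d1 : measure_display} {X : measurableType d1} {Y : Type}
  (mu : set X -> \bar R) (c : X -> Y -> R) (f : X -> \bar R) (y : Y) : \bar R :=
  - lne (\int[mu]_x expeR (f x - (c x y)%:E)).

Definition ccconj {R : realType} {d2 : measure_display} {Y : measurableType d2} {X : Type}
  (nu : set Y -> \bar R) (c : X -> Y -> R) (g : Y -> \bar R) (x : X) : \bar R :=
  - lne (\int[nu]_y expeR (g y - (c x y)%:E)).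

From HB Require Import structures.
From mathcomp Require Import all_boot all_order all_algebra.
From mathcomp Require Import all_classical all_reals all_analysis measurable_realfun.
From mathcomp Require Import lra ring.
Import Order.TTheory GRing.Theory Num.Theory.
Local Open Scope classical_set_scope.
Local Open Scope ring_scope.

(* The upper growth bound on the cost gives
   f(x) - c(x,y) >= h_y(x) with h_y integrable in x.  Jensen's inequality for
   exp on the probability space (X, mu) gives exp(mu(h_y)) <= mu(e^{f-c(.,y)}),
   hence f^c(y) <= - mu(h_y), and mu(h_y) is computed by linearity.

   The first bound together with the lower growth bound
   on the cost gives f^c(y) - c(x,y) <= K + sum_i t_i |y|^beta_i with t_i >= 0.
   To integrate the exponential of this sum against nu, write sum_i w_i as the
   mean of the N numbers N w_i - b_i shifted by the mean m of the b_i, and use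
   the convexity of exp; with b_i = C (N t_i)^(q_i) every term is controlled by
   the assumed moment bound, and the total is C0 exp(m), where
   m = C sum_i N^(q_i - 1) t_i^(q_i). *)

(* Jensen's inequality for exp and a uniform average of N >= 1 numbers,
   obtained by averaging the tangent lines of exp at the mean. *)
Lemma expR_mean_le (R : realType) (N : nat) (z : 'I_N -> R) : (0 < N)%N ->
  expR ((\sum_i z i) / N%:R) <= (\sum_i expR (z i)) / N%:R.
Proof.
move=> N0; set m := (\sum_i z i) / N%:R.
have Npos : (0 : R) < N%:R by rewrite ltr0n.
have tangent i : expR m * (1 + (z i - m)) <= expR (z i).
  by rewrite -[in leRHS](subrK m (z i)) expRD mulrC ler_wpM2r ?expR_ge0 ?expR_ge1Dx.
rewrite ler_pdivlMr // (le_trans _ (ler_sum _ (fun i _ => tangent i))) //.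
rewrite -mulr_sumr !big_split /= sumrN !sumr_const card_ord.
by rewrite -[m *+ N]mulr_natr /m divfK ?gt_eqF // subrr addr0.
Qed.

Lemma expR_sum_le_shifted (R : realType) (N : nat) (w b : 'I_N -> R) : (0 < N)%N ->
  expR (\sum_i w i) <=
  \sum_i expR ((\sum_j b j) / N%:R) / N%:R * expR (- b i) * expR (N%:R * w i).
Proof.
move=> N0; set m := (\sum_j b j) / N%:R.
have Nneq0 : N%:R != 0 :> R by rewrite pnatr_eq0 -lt0n.
have mean_z : (\sum_i (N%:R * w i - b i)) / N%:R = \sum_i w i - m.
  by rewrite sumrB -mulr_sumr mulrBl mulrC mulKf.
have -> : \sum_i expR m / N%:R * expR (- b i) * expR (N%:R * w i) =
    expR m * ((\sum_i expR (N%:R * w i - b i)) / N%:R).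
  rewrite mulr_suml mulr_sumr; apply: eq_bigr => i _.
  by rewrite [N%:R * w i - b i]addrC expRD; ring.
rewrite -[in leLHS](subrK m (\sum_i w i)) expRD mulrC -mean_z.
by rewrite ler_wpM2l ?expR_ge0 ?expR_mean_le.
Qed.

Lemma powR_scale_mean (R : realType) (n t q C : R) : 0 < n -> 0 <= t ->
  C * (n * t) `^ q / n = C * (n `^ (q - 1) * t `^ q).
Proof.
move=> n0 t0; rewrite powRM ?(ltW n0) // powRB; last by apply/implyP => _; rewrite gt_eqF.
by rewrite powRr1 ?(ltW n0) //; ring.
Qed.

Lemma lee_sub_cost (R : realType) (N : nat) (a : \bar R) (V c1 c2 am cost : R)
  (k m q : 'I_N -> R) :
  (a - c2%:E <= (V + \sum_i k i * q i)%:E)%E ->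
  c1 + c2 - am - \sum_i m i * q i <= cost ->
  (a - cost%:E <= (V - c1 + am + \sum_i (k i + m i) * q i)%:E)%E.
Proof.
have -> : \sum_i (k i + m i) * q i = \sum_i k i * q i + \sum_i m i * q i.
  by rewrite -big_split; apply: eq_bigr => i _; rewrite mulrDl.
case: a => [r| |] ha hcost; last by rewrite leNye.
- by move: ha; rewrite -!EFinB !lee_fin; lra.
- by move: ha; rewrite leye_eq.
Qed.

Lemma dist_measurable (R : realType) (disp : measure_display) (T : measurableType disp)
  (d : T -> T -> R) (z : T) : polish_borel d -> measurable_fun setT (fun y => d y z).
Proof.
move=> [[_ [_ [dsym dtri]]] [_ [_ mE]]] mT.
apply: (measurability _ (RGenInftyO.measurableE R)) => //.
move=> /= _ [_ [r ->] <-]; rewrite setTI mE; apply: sub_sigma_algebra => y /=.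
rewrite in_itv /= => yr; exists (r - d y z); first by rewrite subr_gt0.
by move=> w /= hw; rewrite in_itv /=; have := dtri w y z; rewrite (dsym w y); lra.
Qed.
Arguments dist_measurable {R disp T d} z.

Lemma measurable_expeR (R : realType) : measurable_fun [set: \bar R] (@expeR R).
Proof.
rewrite (_ : expeR = fun x => if x == -oo%E then 0%E else er_map expR x); last first.
  by apply: funext => -[].
apply: measurable_fun_ifT => //.
- apply: (measurable_fun_bool true).
  rewrite setTI (_ : _ @^-1` _ = [set -oo%E]); first exact: emeasurable_set1.
  by apply/seteqP; split => x /=; [move=> /eqP|move=> ->; rewrite eqxx].
- by apply: (@measurable_er_map _ R R); exact: measurable_expR.
Qed.

Section real_integrals.
Context {d : measure_display} {T : measurableType d} {R : realType}.
Variable mu : {measure set T -> \bar R}.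

Lemma ge0_integrable (h : T -> R) : measurable_fun setT h -> (forall x, 0 <= h x) ->
  (\int[mu]_x (h x)%:E < +oo)%E -> mu.-integrable setT (EFin \o h).
Proof.
move=> mh h0 fin; apply/integrableP; split; first exact/measurable_EFinP.
by under eq_integral do rewrite /comp gee0_abs ?lee_fin ?h0//.
Qed.

Lemma integrableD_R (f g : T -> R) : mu.-integrable setT (EFin \o f) ->
  mu.-integrable setT (EFin \o g) -> mu.-integrable setT (EFin \o (f \+ g)).
Proof.
move=> if_ ig; apply: (eq_integrable measurableT ((EFin \o f) \+ (EFin \o g))%E).
  by move=> x _; rewrite /= EFinD.
exact: integrableD.
Qed.

Lemma integrableB_R (f g : T -> R) : mu.-integrable setT (EFin \o f) ->
  mu.-integrable setT (EFin \o g) -> mu.-integrable setT (EFin \o (f \- g)).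
Proof.
move=> if_ ig; apply: (eq_integrable measurableT ((EFin \o f) \- (EFin \o g))%E).
  by move=> x _; rewrite /= EFinB.
exact: integrableB.
Qed.

Lemma integrableZl_R (k : R) (f : T -> R) : mu.-integrable setT (EFin \o f) ->
  mu.-integrable setT (EFin \o (fun x => k * f x)).
Proof.
move=> if_; apply: (eq_integrable measurableT (fun x => k%:E * (EFin \o f) x)%E) => //.
exact: integrableZl.
Qed.

Lemma integrable_sum_R (N : nat) (F : 'I_N -> T -> R) :
  (forall i, mu.-integrable setT (EFin \o F i)) ->
  mu.-integrable setT (EFin \o (fun x => \sum_i F i x)).
Proof.
move=> iF; apply: (eq_integrable measurableT (fun x => \sum_i (F i x)%:E)%E).
  by move=> x _; rewrite /= sumEFin.
by apply: integrable_sum => // i _; exact: iF.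
Qed.

Lemma Rintegral_sum (N : nat) (F : 'I_N -> T -> R) :
  (forall i, mu.-integrable setT (EFin \o F i)) ->
  \int[mu]_x (\sum_i F i x) = \sum_i \int[mu]_x F i x.
Proof.
move=> iF; rewrite /Rintegral; under eq_integral do rewrite -sumEFin.
rewrite integral_sum // -EFin_sum_fine //= => i _.
exact: integrable_fin_num (iF i).
Qed.

Lemma ge0_integral_lincomb (N : nat) (k : 'I_N -> R) (F : 'I_N -> T -> R) :
  (forall i, 0 <= k i) -> (forall i x, 0 <= F i x) -> (forall i, measurable_fun setT (F i)) ->
  (\int[mu]_x (\sum_i k i * F i x)%:E = \sum_i (k i)%:E * \int[mu]_x (F i x)%:E)%E.
Proof.
move=> k0 F0 mF; under eq_integral do rewrite -sumEFin.
rewrite ge0_integral_sum //; last 2 first.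
- by move=> i; apply/measurable_EFinP/measurable_funM.
- by move=> i x _; rewrite lee_fin mulr_ge0.
apply: eq_bigr => i _; rewrite -ge0_integralZl_EFin //.
- by move=> x _; rewrite lee_fin.
- exact/measurable_EFinP.
Qed.

End real_integrals.
Arguments ge0_integrable {d T R mu h}.
Arguments integrableD_R {d T R mu f g}.
Arguments integrableB_R {d T R mu f g}.
Arguments integrableZl_R {d T R mu} k {f}.
Arguments integrable_sum_R {d T R mu N F}.
Arguments Rintegral_sum {d T R mu N F}.
Arguments ge0_integral_lincomb {d T R mu N k F}.

Section exponential_integrals.
Context {d : measure_display} {T : measurableType d} {R : realType}.
Variable P : probability T R.

(* Jensen's inequality for exp on a probability space: exp(E h) <= E exp(h),
   by integrating the tangent line of exp at E h. *)
Lemma expR_Rintegral_le (h : T -> R) : P.-integrable setT (EFin \o h) ->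
  ((expR (\int[P]_x h x))%:E <= \int[P]_x (expR (h x))%:E)%E.
Proof.
move=> ih; have mh : measurable_fun setT h by case/integrableP: ih => /measurable_EFinP.
set m := \int[P]_x h x; pose tangent x := expR m * (1 - m) + expR m * h x.
have ihZ : P.-integrable setT (EFin \o (fun x => expR m * h x)) := integrableZl_R _ ih.
have icst : P.-integrable setT (EFin \o (fun _ => expR m * (1 - m))).
  exact: finite_measure_integrable_cst.
have tangent_le x : tangent x <= expR (h x).
  rewrite /tangent -mulrDr -[in leRHS](subrK m (h x)) expRD mulrC.
  by rewrite ler_wpM2r ?expR_ge0 // (le_trans _ (expR_ge1Dx _)) //; lra.
have -> : expR m = \int[P]_x tangent x.
  rewrite RintegralD // (@Rintegral_cst _ _ _ P setT measurableT).
  have -> : fine (P [set: T]) = 1 by rewrite probability_setT.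
  by rewrite RintegralZl // mulr1 -/m; ring.
set I := (X in (_ <= X)%E); have [->|fin] := eqVneq I +oo%E; first exact: leey.
have iexp : P.-integrable setT (EFin \o (expR \o h)).
  apply: ge0_integrable; [exact: measurableT_comp|by move=> x; rewrite expR_ge0|].
  by rewrite ltey.
rewrite /I -(fineK (integrable_fin_num measurableT iexp)) lee_fin.
by apply: le_Rintegral => //; exact: integrableD_R icst ihZ.
Qed.

Lemma Rintegral_le_lne_integral (h : T -> R) (g : T -> \bar R) :
  P.-integrable setT (EFin \o h) -> measurable_fun setT g ->
  (forall x, (h x)%:E <= g x)%E ->
  ((\int[P]_x h x)%:E <= lne (\int[P]_x expeR (g x)))%E.
Proof.
move=> ih mg hg; rewrite -[X in (X <= _)%E]expeRK.
rewrite lee_lne ?in_itv /= ?lee_fin ?expR_ge0 ?leey ?integral_ge0 //; last first.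
  by move=> x _; exact: expeR_ge0.
apply: le_trans (expR_Rintegral_le _ ih) _; apply: ge0_le_integral => //.
- apply/measurable_EFinP/measurableT_comp => //.
  by case/integrableP: ih => /measurable_EFinP.
- exact: measurableT_comp (@measurable_expeR R) mg.
- by move=> x _; rewrite -[leLHS]/(expeR (h x)%:E) lee_expeR.
Qed.

(* The constant C0
   does not grow with N thanks to the shifted convexity bound. *)
Lemma integral_expR_sum_le (N : nat) (w : 'I_N -> T -> R) (b : 'I_N -> R) (C0 : R) :
  1 <= C0 -> (forall i, measurable_fun setT (w i)) ->
  (forall i, \int[P]_x (expR (N%:R * w i x))%:E <= (C0 * expR (b i))%:E)%E ->
  (\int[P]_x (expR (\sum_i w i x))%:E <= (C0 * expR ((\sum_i b i) / N%:R))%:E)%E.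
Proof.
move=> C01 mw hw; have [N0|Npos] := posnP N.
  have sum0 (F : 'I_N -> R) : \sum_i F i = 0.
    by apply: big1 => -[i hi] _; exfalso; move: hi; rewrite N0.
  under eq_integral do rewrite sum0 expR0.
  rewrite (@integral_cst _ _ _ P setT measurableT) mul1e sum0 mul0r expR0 mulr1.
  by apply: le_trans (probability_le1 P measurableT) _; rewrite lee_fin.
set m := (\sum_i b i) / N%:R; pose k i := expR m / N%:R * expR (- b i).
have k0 i : 0 <= k i by rewrite /k !mulr_ge0 ?expR_ge0 ?invr_ge0.
have mexp i : measurable_fun setT (fun x => expR (N%:R * w i x)).
  by apply: measurableT_comp => //; exact: measurable_funM.
apply: (@le_trans _ _ (\int[P]_x (\sum_i k i * expR (N%:R * w i x))%:E)%E).
  apply: ge0_le_integral => //.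
  - apply/measurable_EFinP/measurableT_comp => //.
    by apply: measurable_sum => i; exact: mw.
  - by apply/measurable_EFinP/measurable_sum => i; exact: measurable_funM.
  - by move=> x _; rewrite lee_fin; exact: expR_sum_le_shifted.
rewrite ge0_integral_lincomb //.
apply: (@le_trans _ _ (\sum_(i < N) (expR m / N%:R * C0)%:E)%E).
  apply: lee_sum => i _; apply: le_trans (lee_wpmul2l _ (hw i)) _; first by rewrite lee_fin.
  by rewrite -EFinM lee_fin /k mulrACA -expRD addNr expR0 mulr1 mulrC.
rewrite sumEFin sumr_const card_ord lee_fin -[_ *+ N]mulr_natr mulrAC.
by rewrite divfK ?gt_eqF ?ltr0n // mulrC.
Qed.

End exponential_integrals.
Arguments expR_Rintegral_le {d T R P h}.
Arguments Rintegral_le_lne_integral {d T R P h g}.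
Arguments integral_expR_sum_le {d T R P N w} b {C0}.

Lemma cconj_upper (R : realType) (d1 : measure_display) (X : measurableType d1) (Y : Type)
  (mu : probability X R) (c : X -> Y -> R) (c1 ap f : X -> R) (c2 : Y -> R)
  (N : nat) (K : 'I_N -> R) (P : 'I_N -> X -> R) (Q : 'I_N -> Y -> R) (y : Y) :
  mu.-integrable setT (EFin \o f) -> mu.-integrable setT (EFin \o c1) ->
  mu.-integrable setT (EFin \o ap) -> (forall i, mu.-integrable setT (EFin \o P i)) ->
  measurable_fun setT (c ^~ y) ->
  (forall x, c x y <= c1 x + c2 y + ap x + \sum_i K i * P i x * Q i y) ->
  (cconj mu c (EFin \o f) y - (c2 y)%:E <=
   (\int[mu]_x ap x - \int[mu]_x (f x - c1 x)
    + \sum_i K i * \int[mu]_x P i x * Q i y)%:E)%E.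
Proof.
move=> if_ ic1 iap iP mcy cle.
pose h x := f x - c1 x - c2 y - ap x - \sum_i K i * Q i y * P i x.
have ifc1 : mu.-integrable setT (EFin \o (fun x => f x - c1 x)) := integrableB_R if_ ic1.
have ic2 : mu.-integrable setT (EFin \o (fun _ => c2 y)).
  exact: finite_measure_integrable_cst.
have ifc := integrableB_R ifc1 ic2; have ifca := integrableB_R ifc iap.
have iKP i : mu.-integrable setT (EFin \o (fun x => K i * Q i y * P i x)).
  exact: integrableZl_R.
have iKPs := integrable_sum_R iKP.
have ih : mu.-integrable setT (EFin \o h) := integrableB_R ifca iKPs.
have Ih : \int[mu]_x h x = \int[mu]_x (f x - c1 x) - c2 y - \int[mu]_x ap x
    - \sum_i K i * \int[mu]_x P i x * Q i y.
  rewrite /h !RintegralB // (@Rintegral_cst _ _ _ mu setT measurableT).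
  have -> : fine (mu [set: X]) = 1 by rewrite probability_setT.
  rewrite Rintegral_sum // mulr1; congr (_ - _); apply: eq_bigr => i _.
  by rewrite RintegralZl // mulrAC.
have h_le x : h x <= f x - c x y.
  rewrite /h (eq_bigr (fun i => K i * P i x * Q i y)); last by move=> i _; rewrite mulrAC.
  have := cle x; lra.
have le_lne : ((\int[mu]_x h x)%:E <=
    lne (\int[mu]_x expeR ((EFin \o f) x - (c x y)%:E)))%E.
  apply: Rintegral_le_lne_integral ih _ _.
  - apply: emeasurable_funB; first by case/integrableP: if_.
    exact/measurable_EFinP.
  - by move=> x; rewrite /= -EFinB lee_fin h_le.
have -> : (\int[mu]_x ap x - \int[mu]_x (f x - c1 x)
    + \sum_i K i * \int[mu]_x P i x * Q i y)%:E = (- (\int[mu]_x h x)%:E - (c2 y)%:E)%E.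
  by rewrite Ih -EFinN -EFinB; congr EFin; ring.
by apply: leeB => //; rewrite leeN2.
Qed.

Section cconj_lower_bound.
Context {d2 : measure_display} {Y : measurableType d2} {R : realType}.
Variable nu : probability Y R.

Lemma integral_expR_lincomb_le (N : nat) (Q : 'I_N -> Y -> R) (t q : 'I_N -> R) (C C0 : R) :
  (forall i, measurable_fun setT (Q i)) -> (forall i, 0 <= t i) -> 1 <= C0 ->
  (forall (s : R) (i : 'I_N), 0 <= s ->
     (\int[nu]_y (expR (s * Q i y))%:E <= (C0 * expR (C * s `^ q i))%:E)%E) ->
  (\int[nu]_y (expR (\sum_i t i * Q i y))%:E
    <= (C0 * expR (C * \sum_i N%:R `^ (q i - 1) * t i `^ q i))%:E)%E.
Proof.
move=> mQ t0 C01 moment.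
have mw i : measurable_fun setT (fun y => t i * Q i y) by exact: measurable_funM.
have scaled_moment i : (\int[nu]_y (expR (N%:R * (t i * Q i y)))%:E
    <= (C0 * expR (C * (N%:R * t i) `^ q i))%:E)%E.
  by under eq_integral do rewrite mulrA; apply: moment; rewrite mulr_ge0.
have mean : (\sum_i C * (N%:R * t i) `^ q i) / N%:R
    = C * \sum_i N%:R `^ (q i - 1) * t i `^ q i.
  rewrite mulr_suml mulr_sumr; apply: eq_bigr => i _.
  by apply: powR_scale_mean => //; rewrite ltr0n (leq_ltn_trans _ (ltn_ord i)).
by rewrite -mean; exact: integral_expR_sum_le.
Qed.

Lemma ccconj_ge_neg_ln {X : Type} (c : X -> Y -> R) (g : Y -> \bar R) (x : X) (B : R) :
  0 < B -> (\int[nu]_y expeR (g y - (c x y)%:E) <= B%:E)%E ->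
  ((- ln B)%:E <= ccconj nu c g x)%E.
Proof.
move=> B0 int_le; rewrite /ccconj EFinN leeN2 -lne_EFin //.
rewrite lee_lne ?in_itv /= ?leey ?lee_fin ?(ltW B0) ?andbT //.
by apply: integral_ge0 => y _; exact: expeR_ge0.
Qed.

Lemma ccconj_lower {X : Type} (c : X -> Y -> R) (g : Y -> \bar R) (x : X)
  (N : nat) (Q : 'I_N -> Y -> R) (t q : 'I_N -> R) (K C C0 : R) :
  measurable_fun setT g -> measurable_fun setT (c x) -> (forall i, measurable_fun setT (Q i)) ->
  (forall i, 0 <= t i) -> 1 <= C0 ->
  (forall (s : R) (i : 'I_N), 0 <= s ->
     (\int[nu]_y (expR (s * Q i y))%:E <= (C0 * expR (C * s `^ q i))%:E)%E) ->
  (forall y, g y - (c x y)%:E <= (K + \sum_i t i * Q i y)%:E)%E ->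
  ((- K - ln C0 - C * \sum_i N%:R `^ (q i - 1) * t i `^ q i)%:E <= ccconj nu c g x)%E.
Proof.
move=> mg mcx mQ t0 C01 moment gle; set S := \sum_i _.
have mt : measurable_fun setT (fun y => \sum_i t i * Q i y).
  by apply: measurable_sum => i; exact: measurable_funM.
have C0pos : 0 < C0 := lt_le_trans ltr01 C01.
have B0 : 0 < expR K * (C0 * expR (C * S)) by rewrite !mulr_gt0 ?expR_gt0.
have -> : - K - ln C0 - C * S = - ln (expR K * (C0 * expR (C * S))).
  rewrite lnM ?posrE ?expR_gt0 ?mulr_gt0 ?expR_gt0 //.
  by rewrite lnM ?posrE ?expR_gt0 // !expRK; ring.
have mexp : measurable_fun setT (fun y => expR (\sum_i t i * Q i y)).
  exact: measurableT_comp (@measurable_expR R) mt.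
apply: ccconj_ge_neg_ln => //.
apply: (@le_trans _ _ (\int[nu]_y ((expR K)%:E * (expR (\sum_i t i * Q i y))%:E))%E).
  apply: ge0_le_integral => //.
  - by move=> y _; exact: expeR_ge0.
  - have mgc : measurable_fun setT (fun y => g y - (c x y)%:E)%E.
      by apply: emeasurable_funB => //; apply/measurable_EFinP.
    exact: measurableT_comp (@measurable_expeR R) mgc.
  - by apply/measurable_EFinP/measurable_funM.
  - move=> y _; rewrite -EFinM -expRD.
    by rewrite -[leRHS]/(expeR (K + \sum_i t i * Q i y)%:E) lee_expeR.
rewrite ge0_integralZl_EFin ?expR_ge0 //; last exact/measurable_EFinP.
rewrite EFinM lee_wpmul2l ?lee_fin ?expR_ge0 //.
exact: integral_expR_lincomb_le.
Qed.

End cconj_lower_bound.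
Arguments ccconj_lower {d2 Y R nu X c g x N Q t} q {K C C0}.

Theorem lemma5p5 (R : realType) (d1 d2 : measure_display)
  (X : measurableType d1) (Y : measurableType d2)
  (dX : X -> X -> R) (dY : Y -> Y -> R) (x0 : X) (y0 : Y)
  (mu : probability X R) (nu : probability Y R)
  (c : X -> Y -> R) (c1 : X -> R) (c2 : Y -> R) (chat : X -> Y -> R)
  (p lam : R) (N : nat) (alpha beta Kp Km : 'I_N -> R)
  (ap am : X -> R) (C C0 : R) (f : X -> R) :
  polish_borel dX -> polish_borel dY ->
  (* cost *)
  measurable_fun setT (fun z : X * Y => c z.1 z.2) ->
  mu.-integrable setT (EFin \o c1) ->
  nu.-integrable setT (EFin \o c2) ->
  (forall x y, c x y = c1 x + c2 y + chat x y) ->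
  (* exponential moment of nu *)
  0 < p -> 0 < lam ->
  (\int[nu]_y (expR (lam * (dY y y0) `^ p))%:E < +oo)%E ->
  (* exponents and constants *)
  (forall i, 0 <= alpha i <= p) ->
  (forall i, 0 <= beta i < p) ->
  (forall i, alpha i + beta i <= p) ->
  (forall i, 0 <= Kp i) -> (forall i, 0 <= Km i) ->
  (forall x, 0 <= ap x) -> (forall x, 0 <= am x) ->
  measurable_fun setT ap -> measurable_fun setT am ->
  (\int[mu]_x (ap x)%:E < +oo)%E ->
  (forall i, \int[mu]_x ((dX x x0) `^ (alpha i))%:E < +oo)%E ->
  (* growth bounds on chat *)
  (forall x y,
     - am x - \sum_(i < N) Km i * (dX x x0) `^ (alpha i) * (dY y y0) `^ (beta i)
       <= chat x y) ->
  (forall x y,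
     chat x y <= ap x + \sum_(i < N) Kp i * (dX x x0) `^ (alpha i) * (dY y y0) `^ (beta i)) ->
  (* the constants C, C0 *)
  0 < C -> 0 < C0 -> 1 <= C0 ->
  (forall (t : R) (i : 'I_N), 0 <= t ->
     (\int[nu]_y (expR (t * (dY y y0) `^ (beta i)))%:E
       <= (C0 * expR (C * t `^ (p / (p - beta i))))%:E)%E) ->
  (* f in L^1(mu), with f^c and f^cc well defined *)
  mu.-integrable setT (EFin \o f) ->
  measurable_fun [set: Y] (fun y : Y => cconj mu c (EFin \o f) y) ->
  let Aplus := fine (\int[mu]_x (ap x)%:E) in
  let Aa := fun i => fine (\int[mu]_x ((dX x x0) `^ (alpha i))%:E) in
  let mufc1 := fine (\int[mu]_x (f x - c1 x)%:E) in
  forall (x : X) (y : Y),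
    (cconj mu c (EFin \o f) y - (c2 y)%:E
       <= (Aplus - mufc1 + \sum_(i < N) Kp i * Aa i * (dY y y0) `^ (beta i))%:E)%E /\
    (ccconj nu c (cconj mu c (EFin \o f)) x - (c1 x)%:E
       >= (mufc1 - Aplus - ln C0 - am x
           - C * \sum_(i < N) (N%:R) `^ (p / (p - beta i) - 1)
                 * (Kp i * Aa i + Km i * (dX x x0) `^ (alpha i)) `^ (p / (p - beta i)))%:E)%E.
Proof.
move=> PX PY mc ic1 _ cdef _ _ _ _ _ _ hKp hKm hap _ map _ iap ial chatlo chathi _ _ C01 moment
  intf mfc Aplus Aa mufc1 x y.
pose P i x' := dX x' x0 `^ alpha i; pose Q i y' := dY y' y0 `^ beta i.
have mP i : measurable_fun setT (P i).
  exact: measurableT_comp (measurable_powR (alpha i)) (dist_measurable x0 PX).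
have mQ i : measurable_fun setT (Q i).
  exact: measurableT_comp (measurable_powR (beta i)) (dist_measurable y0 PY).
have upper y' : (cconj mu c (EFin \o f) y' - (c2 y')%:E
    <= (Aplus - mufc1 + \sum_i Kp i * Aa i * Q i y')%:E)%E.
  apply: cconj_upper intf ic1 (ge0_integrable map hap iap) _ _ _.
  - by move=> i; exact: ge0_integrable (mP i) (fun _ => powR_ge0 _ _) (ial i).
  - exact: measurableT_comp mc (pair2_measurable y').
  - by move=> x'; rewrite cdef; have := chathi x' y'; lra.
split; first exact: upper.
have Aa0 i : 0 <= Aa i by apply/fine_ge0/integral_ge0 => z _; rewrite lee_fin powR_ge0.
have t0 i : 0 <= Kp i * Aa i + Km i * P i x by rewrite addr_ge0 ?mulr_ge0 ?powR_ge0.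
have lower := ccconj_lower (fun i => p / (p - beta i)) (K := Aplus - mufc1 - c1 x + am x)
  mfc (measurableT_comp mc (pair1_measurable x)) mQ t0 C01 moment.
rewrite leeBrDr // -EFinD; apply: le_trans (lower _); first by rewrite lee_fin; lra.
move=> y'; apply: lee_sub_cost (upper y') _.
by rewrite /= cdef; have := chatlo x y'; lra.
Qed.
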